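(* Let $k$ be a perfect field of characteristic $p>0$, $P$ a finite poset, $R=\mathcal{R}_k[J(P)]$ the Hibi ring and $\mathfrak{m}=R_+$. Then \[ \operatorname{fpt}(\mathfrak{m})\le\min\{\operatorname{len}C\mid C\text{ a maximal chain in }\overline{P}\}=\min\{\operatorname{len}C\mid C\text{ a maximal chain in }P\}+2 . \]
   Context: $J(P)$ is the set of poset ideals of $P=\{p_1,\dots,p_N\}$ (down-closed subsets, including $\emptyset$ and $P$). The Hibi ring is $\mathcal{R}_k[J(P)]=k[\,T\prod_{p_i\in I}X_i\mid I\in J(P)\,]\subseteq k[T,X_1,\dots,X_N]$, each generator in degree $1$; $\mathfrak{m}=R_+$ is generated by these generators. $\overline{P}=P\cup\{-\infty,\infty\}$ with $-\infty<x<\infty$ for all $x\in P$. The length of a chain $C$ is $\#C-1$. For a real $t\ge0$, the pair $(R,\mathfrak{m}^t)$ is $F$-pure if for all large $q=p^e$ there is $d\in\mathfrak{m}^{\lceil t(q-1)\rceil}$ such that the $R$-linear map $R\to R^{1/q}$, $1\mapsto d^{1/q}$, splits; $\operatorname{fpt}(\mathfrak{m})=\sup\{t\ge0\mid(R,\mathfrak{m}^t)\text{ is }F\text{-pure}\}$. *)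

From HB Require Import structures.
From mathcomp Require Import all_boot all_order all_algebra.
From mathcomp Require Import mpoly.
From mathcomp Require Import classical_sets reals ereal.
Set Implicit Arguments. Unset Strict Implicit. Unset Printing Implicit Defensive.
Import Order.TTheory GRing.Theory Num.Theory.
Local Open Scope ring_scope.

(* variable 0 is T, variable (lift ord0 i) is X_(i+1) for i : 'I_N.          *)
Notation polyR k N := (mpoly.mpoly N.+1 k).

Definition varT (k : fieldType) (N : nat) : polyR k N :=
  mpoly.mpolyX k (mpoly.mnm1 (@ord0 N)).
Definition varX (k : fieldType) (N : nat) (i : 'I_N) : polyR k N :=
  mpoly.mpolyX k (mpoly.mnm1 (lift ord0 i)).

Definition is_partial_order (N : nat) (le : rel 'I_N) : Prop :=
  [/\ reflexive le, antisymmetric le & transitive le].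

Definition poset_ideal (N : nat) (le : rel 'I_N) (I : {set 'I_N}) : Prop :=
  forall x y : 'I_N, le x y -> y \in I -> x \in I.

Definition hibi_gen (k : fieldType) (N : nat) (le : rel 'I_N) (g : polyR k N) : Prop :=
  exists I : {set 'I_N}, poset_ideal le I /\ g = varT k N * \prod_(i in I) varX k i.

Inductive in_kalg (k : fieldType) (N : nat) (G : polyR k N -> Prop) : polyR k N -> Prop :=
  | kalg_const (c : k) : in_kalg G (mpoly.mpolyC N.+1 c)
  | kalg_gen g : G g -> in_kalg G g
  | kalg_add x y : in_kalg G x -> in_kalg G y -> in_kalg G (x + y)
  | kalg_mul x y : in_kalg G x -> in_kalg G y -> in_kalg G (x * y).

Definition hibi_ring (k : fieldType) (N : nat) (le : rel 'I_N) : polyR k N -> Prop :=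
  in_kalg (hibi_gen le).

Inductive ideal_gen (k : fieldType) (N : nat) (R G : polyR k N -> Prop) : polyR k N -> Prop :=
  | igen_zero : ideal_gen R G 0
  | igen_gen g : G g -> ideal_gen R G g
  | igen_add x y : ideal_gen R G x -> ideal_gen R G y -> ideal_gen R G (x + y)
  | igen_mul r x : R r -> ideal_gen R G x -> ideal_gen R G (r * x).

Definition hibi_max (k : fieldType) (N : nat) (le : rel 'I_N) : polyR k N -> Prop :=
  ideal_gen (hibi_ring le) (hibi_gen le).

Fixpoint ideal_pow (k : fieldType) (N : nat) (R I : polyR k N -> Prop) (n : nat)
  : polyR k N -> Prop :=
  match n with
  | 0 => R
  | n'.+1 => ideal_gen R (fun z => exists a b, ideal_pow R I n' a /\ I b /\ z = a * b)
  end.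

(* The R-linear map R -> R^{1/q}, 1 |-> d^{1/q}, splits.  Identifying R^{1/q}
   with R (x^{1/q} <-> x), the R-module structure on R^{1/q} becomes
   r . x = r^q x, the map becomes r |-> r^q d, and a splitting is an additive
   map phi : R -> R with phi (r^q x) = r phi x and phi (r^q d) = r. *)
Definition splits_at (k : fieldType) (N : nat) (R : polyR k N -> Prop) (q : nat)
  (d : polyR k N) : Prop :=
  exists phi : polyR k N -> polyR k N,
    [/\ forall x, R x -> R (phi x),
        forall x y, R x -> R y -> phi (x + y) = phi x + phi y,
        forall r x, R r -> R x -> phi (r ^+ q * x) = r * phi x
      & forall r, R r -> phi (r ^+ q * d) = r].

Definition Fpure_pair (k : fieldType) (N : nat) (R I : polyR k N -> Prop) (p : nat)
  (rT : realType) (t : rT) : Prop :=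
  exists e0 : nat, forall e : nat, (e0 <= e)%N ->
    let q := (p ^ e)%N in
    exists d, ideal_pow R I `|Num.ceil (t * (q%:R - 1))|%N d /\ splits_at R q d.

Definition fpt (k : fieldType) (N : nat) (R I : polyR k N -> Prop) (p : nat)
  (rT : realType) : \bar rT :=
  ereal_sup [set (t%:E)%E | t in [set t : rT | 0 <= t /\ Fpure_pair R I p t]].

Definition is_chain (T : finType) (r : rel T) (C : {set T}) : bool :=
  [forall x in C, forall y in C, r x y || r y x].

Definition is_maximal_chain (T : finType) (r : rel T) (C : {set T}) : bool :=
  is_chain r C && [forall D : {set T}, (is_chain r D && (C \subset D)) ==> (D == C)].

Definition chain_len (T : finType) (C : {set T}) : int := (#|C|%:Z - 1)%R.

(* minimal length of a maximal chain (a maximal chain always exists in a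
   finite poset, and #|C| <= #|T|, so the default #|T| is never strictly below
   the true minimum) *)
Definition min_maxchain_len (T : finType) (r : rel T) : int :=
  ((\big[minn/#|T|]_(C : {set T} | is_maximal_chain r C) #|C|)%:Z - 1)%R.

(* inl i = p_i, inr false = -oo, inr true = +oo *)
Definition Pbar (N : nat) : finType := ('I_N + bool)%type.

Definition le_bar (N : nat) (le : rel 'I_N) : rel (Pbar N) :=
  fun x y =>
    match x, y with
    | inl i, inl j => le i j
    | inr false, _ => true
    | _, inr true => true
    | _, _ => false
    end.

Definition perfect_field (k : fieldType) (p : nat) : Prop :=
  forall x : k, exists y : k, y ^+ p = x.

From HB Require Import structures.
From mathcomp Require Import all_boot all_order all_algebra.
From mathcomp Require Import mpoly.
From mathcomp Require Import zify.
From mathcomp Require Import reals ereal.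
Import Order.TTheory GRing.Theory Num.Theory.
Set Implicit Arguments. Unset Strict Implicit. Unset Printing Implicit Defensive.

(* A monomial T^a X^b of k[T, X] is read as the function -oo |-> a, p_i |-> b_i, +oo |-> 0
   on Pbar; the monomials of the Hibi ring R are exactly the order-reversing ones, and
   elements of m^n only involve monomials of T-degree at least n.  Let phi split
   R -> R^(1/q), 1 |-> d^(1/q), so that phi d = 1.  If a monomial u of R drops by at least q
   across a cover c < c' of Pbar, the q-linearity of phi trades X^u for another monomial
   X^v with X^g phi(X^u) = X^h phi(X^v), and comparing coefficients shows that phi(X^u) has
   no constant term.  A monomial without such a drop along a maximal chain C of Pbar has
   T-degree at most len(C) (q - 1).  Since k is perfect, phi d is a combination of the
   phi(X^u), so d in m^n forces n <= len(C) (q - 1); hence every F-pure exponent t satisfies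
   t (q - 1) <= len(C) (q - 1).  The two minimal lengths differ by the endpoints -oo, +oo. *)

Section Chains.
Variables (T : finType) (r : rel T).
Hypotheses (r_refl : reflexive r) (r_trans : transitive r) (r_anti : antisymmetric r).

Lemma is_chainP (C : {set T}) :
  reflect {in C &, forall x y, r x y || r y x} (is_chain r C).
Proof.
apply: (iffP forallP) => [chC x y xC yC | chC x].
  by have /implyP/(_ xC)/forallP/(_ y)/implyP := chC x; apply.
by apply/implyP=> xC; apply/forallP=> y; apply/implyP; exact: chC.
Qed.

Lemma maximal_chain_mem (C : {set T}) x :
  is_maximal_chain r C -> {in C, forall y, r x y || r y x} -> x \in C.
Proof.
case/andP=> /is_chainP chC /forallP/(_ (x |: C))/implyP maxC xC.
suff /eqP <- : x |: C == C by rewrite setU11.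
apply: maxC; rewrite subsetU1 andbT; apply/is_chainP.
move=> y z /setU1P[-> | yC] /setU1P[-> | zC]; rewrite ?r_refl ?xC //.
  by rewrite orbC xC.
exact: chC.
Qed.

Lemma exists_maximal_chain : exists C, is_maximal_chain r C.
Proof.
have chain0 : is_chain r set0 by apply/is_chainP=> x y; rewrite inE.
case: (@arg_maxnP _ set0 (is_chain r) (fun C => #|C|) chain0) => C chC maxC.
exists C; rewrite /is_maximal_chain chC; apply/forallP=> D.
apply/implyP=> /andP[chD sCD]; rewrite eq_sym eqEcard sCD.
exact: maxC.
Qed.

Lemma min_maxchain_lenP :
  exists2 C, is_maximal_chain r C &
    min_maxchain_len r = (#|C|%:Z - 1)%R
    /\ forall D, is_maximal_chain r D -> #|C| <= #|D|.
Proof.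
have [C0 maxC0] := exists_maximal_chain.
rewrite /min_maxchain_len -minEnat.
have [C maxC minE] := eq_bigmin C0 (is_maximal_chain r) (fun C => #|C|) maxC0
  (fun D _ => max_card D).
exists C; first exact: maxC.
split=> [|D maxD]; first by rewrite minE.
by rewrite -minE; exact: (bigmin_le_cond _ (fun C : {set T} => #|C|) maxD).
Qed.

Definition covby x y := [/\ r x y, x != y & forall z, r x z -> r z y -> z = x \/ z = y].

Definition strict_up (C : {set T}) x := [set y in C | (y != x) && r x y].

Lemma chain_has_min (C A : {set T}) a : is_chain r C -> A \subset C -> a \in A ->
  exists2 s, s \in A & {in A, forall y, r s y}.
Proof.
move=> /is_chainP chC /subsetP sAC aA.
case: (@arg_minnP _ a (mem A) (fun s => #|[set z in A | r z s]|) aA) => s sA minS.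
exists s => // y yA; case/orP: (chC _ _ (sAC _ sA) (sAC _ yA)) => // rys.
case: (eqVneq y s) => [-> // | nys]; exfalso.
suff : #|[set z in A | r z y]| < #|[set z in A | r z s]| by rewrite ltnNge minS.
apply: proper_card; apply/properP; split.
  by apply/subsetP=> z; rewrite !inE => /andP[-> /r_trans]; apply.
exists s; first by rewrite inE r_refl andbT.
rewrite inE (_ : s \in A) //=; apply: contra nys => rsy.
by apply/eqP; apply: r_anti; rewrite rys rsy.
Qed.

Lemma maximal_chain_succ (C : {set T}) x y :
  is_maximal_chain r C -> x \in C -> y \in strict_up C x ->
  exists s, [/\ s \in C, covby x s & #|strict_up C x| = #|strict_up C s|.+1].
Proof.
move=> maxC xC yA; have chC : is_chain r C by case/andP: maxC.
have sAC : strict_up C x \subset C by apply/subsetP=> z; rewrite inE => /andP[].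
have [s sA minS] := chain_has_min chC sAC yA.
move: (sA); rewrite inE => /and3P[sC nsx rxs].
have upE : strict_up C x = s |: strict_up C s.
  apply/setP=> z; rewrite !inE; case: (eqVneq z s) => [-> | nzs] /=.
    by rewrite sC nsx rxs.
  case zC: (z \in C) => //=; apply/idP/idP=> [/andP[nzx rxz] | rsz].
    by apply: minS; rewrite inE zC nzx.
  rewrite (r_trans rxs rsz) andbT.
  by apply: contraNneq nsx => zx; apply/eqP/r_anti; rewrite rxs -zx rsz.
exists s; split=> //; last first.
  by rewrite upE cardsU1 inE eqxx andbF.
split=> // [|z rxz rzs]; first by rewrite eq_sym.
case: (eqVneq z x) => [-> | nzx]; [by left | right].
have zC : z \in C.
  apply: (maximal_chain_mem maxC) => u uC.
  have [rxu | rux] := orP (is_chainP _ chC _ _ xC uC).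
    case: (eqVneq u x) => [-> | nux]; first by rewrite rxz orbT.
    by rewrite (r_trans rzs (minS _ _)) // inE uC nux.
  by rewrite (r_trans rux rxz) orbT.
by apply/r_anti; rewrite rzs minS // inE zC nzx.
Qed.

Variables bot top : T.
Hypotheses (bot_min : forall x, r bot x) (top_max : forall x, r x top).

Lemma maximal_chain_weight_bound (C : {set T}) (w : T -> nat) q :
  is_maximal_chain r C -> w top = 0 ->
  (forall x y, x \in C -> y \in C -> covby x y -> w x < w y + q) ->
  w bot <= #|C|.-1 * q.-1.
Proof.
move=> maxC w_top w_cov.
have topC : top \in C by apply: (maximal_chain_mem maxC) => y _; rewrite top_max orbT.
have botC : bot \in C by apply: (maximal_chain_mem maxC) => y _; rewrite bot_min.
suff w_up n x : x \in C -> #|strict_up C x| = n -> w x <= n * q.-1.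
  apply: w_up => //; rewrite (cardsD1 bot C) botC add1n /=.
  by apply: eq_card=> y; rewrite !inE bot_min andbT andbC.
elim: n x => [|n IHn] x xC upx.
  case: (eqVneq x top) => [-> | nxt]; first by rewrite w_top.
  have : top \in strict_up C x by rewrite inE topC top_max eq_sym nxt.
  by move/eqP: upx; rewrite cards_eq0 => /eqP ->; rewrite inE.
have [y yup] : exists y, y \in strict_up C x by apply/card_gt0P; rewrite upx.
have [s [sC covxs ups]] := maximal_chain_succ maxC xC yup.
have := IHn s sC; have := w_cov x s xC sC covxs.
rewrite upx in ups; case: ups => <-; rewrite mulSn; lia.
Qed.
End Chains.

Section BarPoset.
Variables (N : nat) (le : rel 'I_N).
Hypothesis le_order : is_partial_order le.
Local Notation leb := (le_bar le).

Lemma le_bar_refl : reflexive leb.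
Proof. by case: le_order => le_refl _ _ [i | []] //=; exact: le_refl. Qed.

Lemma le_bar_trans : transitive leb.
Proof.
case: le_order => _ _ le_trans [j | []] [i | []] [l | []] //=; exact: le_trans.
Qed.

Lemma le_bar_anti : antisymmetric leb.
Proof.
by case: le_order => _ le_anti _ [i | []] [j | []] //= /le_anti ->.
Qed.

Lemma le_bar_bot x : leb (inr false) x. Proof. by case: x => [i | []]. Qed.
Lemma le_bar_top x : leb x (inr true). Proof. by case: x => [i | []]. Qed.

Definition bar_chain (C : {set 'I_N}) : {set Pbar N} :=
  [set x : Pbar N | if x is inl i then i \in C else true].
Definition unbar_chain (D : {set Pbar N}) : {set 'I_N} := [set i | inl i \in D].

Lemma card_bar_chain C : #|bar_chain C| = #|C| + 2.
Proof.
have -> : bar_chain C = inl @: C :|: [set inr false; inr true].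
  apply/setP=> [[i | []]]; rewrite !inE /=.
  - by rewrite orbF (mem_imset _ _ inl_inj).
  - by rewrite eqxx orbT.
  - by rewrite orbT.
rewrite cardsU card_imset; last exact: inl_inj.
have -> : inl @: C :&: [set inr false; inr true] = set0.
  by apply/setP=> [[i | []]]; rewrite !inE ?andbF //; apply/andP=> [[/imsetP[]]].
by rewrite cards0 subn0 cards2.
Qed.

Lemma bar_chainK : cancel bar_chain unbar_chain.
Proof. by move=> C; apply/setP=> i; rewrite !inE. Qed.

Lemma bar_chain_is_chain C : is_chain le C -> is_chain leb (bar_chain C).
Proof.
move/is_chainP=> chC; apply/is_chainP=> -[i | []] [j | []]; rewrite !inE //=.
all: by move=> *; rewrite ?chC ?le_bar_bot ?le_bar_top ?orbT.
Qed.

Lemma unbar_chain_is_chain D : is_chain leb D -> is_chain le (unbar_chain D).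
Proof. by move/is_chainP=> chD; apply/is_chainP=> i j; rewrite !inE; exact: chD. Qed.

Lemma bar_chain_maximal C : is_maximal_chain le C -> is_maximal_chain leb (bar_chain C).
Proof.
case/andP=> chC /forallP maxC; rewrite /is_maximal_chain bar_chain_is_chain //=.
apply/forallP=> D; apply/implyP=> /andP[chD sCD].
have /eqP unbarD : unbar_chain D == C.
  apply: (implyP (maxC _)); rewrite unbar_chain_is_chain //=.
  by apply/subsetP=> i iC; rewrite inE (subsetP sCD) // inE.
rewrite eqEsubset sCD andbT; apply/subsetP=> -[i | b] xD; rewrite inE //.
by rewrite -unbarD inE.
Qed.

Lemma unbar_chain_maximal D : is_maximal_chain leb D ->
  is_maximal_chain le (unbar_chain D) /\ D = bar_chain (unbar_chain D).
Proof.
move=> maxD; case/andP: (maxD) => chD /forallP maxD'.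
have botD : inr false \in D.
  by apply: (maximal_chain_mem le_bar_refl maxD) => y _; rewrite le_bar_bot.
have topD : inr true \in D.
  by apply: (maximal_chain_mem le_bar_refl maxD) => y _; rewrite le_bar_top orbT.
have DE : D = bar_chain (unbar_chain D).
  by apply/setP=> -[i | []]; rewrite !inE.
split=> //; rewrite /is_maximal_chain unbar_chain_is_chain //=.
apply/forallP=> E; apply/implyP=> /andP[chE sDE].
have /eqP <- : bar_chain E == D.
  apply: (implyP (maxD' _)); rewrite bar_chain_is_chain //=.
  apply/subsetP=> -[i | b] xD; rewrite inE //.
  by apply: (subsetP sDE); rewrite inE.
by rewrite bar_chainK.
Qed.

Lemma min_maxchain_len_bar : min_maxchain_len leb = (min_maxchain_len le + 2)%R.
Proof.
have [C maxC [-> minC]] := min_maxchain_lenP le.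
have [D maxD [-> minD]] := min_maxchain_lenP leb.
have [maxD' DE] := unbar_chain_maximal maxD.
have le_DC : #|D| <= #|C| + 2 by rewrite -card_bar_chain minD ?bar_chain_maximal.
have le_CD : #|C| <= #|unbar_chain D| by exact: minC.
have cardD : #|D| = #|unbar_chain D| + 2 by rewrite {1}DE card_bar_chain.
have -> : #|D| = #|C| + 2 by lia.
by rewrite PoszD; lia.
Qed.
End BarPoset.

Section HibiMonomials.
Variables (k : fieldType) (N : nat) (le : rel 'I_N).
Local Notation leb := (le_bar le).
Local Notation R := (hibi_ring (k:=k) le).
Local Notation mon := 'X_{1..N.+1}.

Definition mexp (m : mon) (x : Pbar N) : nat :=
  match x with inl i => m (lift ord0 i) | inr false => m ord0 | inr true => 0 end.

Definition order_reversing (m : mon) := forall x y, leb x y -> mexp m y <= mexp m x.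

Definition mnm_of (f : Pbar N -> nat) : mon :=
  [multinom if unlift ord0 i is Some j then f (inl j) else f (inr false) | i < N.+1].

Lemma mexp_mnm_of f : f (inr true) = 0 -> mexp (mnm_of f) =1 f.
Proof. by move=> f_top [i | []] //=; rewrite mnmE ?liftK ?unlift_none. Qed.

Lemma mexp_inj m1 m2 : mexp m1 =1 mexp m2 -> m1 = m2.
Proof.
move=> eq_m; apply/mnmP=> i; case: (unliftP ord0 i) => [j -> | ->].
  exact: (eq_m (inl j)).
exact: (eq_m (inr false)).
Qed.

Lemma mexpD m1 m2 x : mexp (m1 + m2)%MM x = mexp m1 x + mexp m2 x.
Proof. by case: x => [i | []] //=; rewrite mnmDE. Qed.

Lemma mexpB m1 m2 x : mexp (m1 - m2)%MM x = mexp m1 x - mexp m2 x.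
Proof. by case: x => [i | []] //=; rewrite mnmBE. Qed.

Lemma mexpMn m q x : mexp (m *+ q)%MM x = mexp m x * q.
Proof. by case: x => [i | []] //=; rewrite mulmnE. Qed.

Lemma mexp_lepm m1 m2 x : (m1 <= m2)%MM -> mexp m1 x <= mexp m2 x.
Proof. by move/mnm_lepP=> m12; case: x => [i | []] /=. Qed.

Lemma order_reversing_mnm_of f : f (inr true) = 0 ->
  (forall x y, leb x y -> f y <= f x) -> order_reversing (mnm_of f).
Proof. by move=> f_top f_rev x y xy; rewrite !mexp_mnm_of //; exact: f_rev. Qed.

Lemma order_reversing0 : order_reversing 0%MM.
Proof. by move=> x [j | []] _ //=; rewrite mnm0E. Qed.

Lemma order_reversingD m1 m2 :
  order_reversing m1 -> order_reversing m2 -> order_reversing (m1 + m2)%MM.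
Proof. by move=> rev1 rev2 x y xy; rewrite !mexpD leq_add ?rev1 ?rev2. Qed.

Definition ideal_exp (I : {set 'I_N}) (x : Pbar N) : nat :=
  match x with inl i => i \in I | inr false => 1 | inr true => 0 end.

Lemma order_reversing_ideal_exp I :
  poset_ideal le I -> order_reversing (mnm_of (ideal_exp I)).
Proof.
move=> idI; apply: order_reversing_mnm_of => // -[i | []] [j | []] //=.
- by move=> lij; case: (boolP (j \in I)) => // /(idI _ _ lij) ->.
all: by case: (_ \in I).
Qed.

Local Open Scope ring_scope.

Lemma hibi_genE (I : {set 'I_N}) :
  varT k N * \prod_(i in I) varX k i = 'X_[mnm_of (ideal_exp I)].
Proof.
rewrite /varT /varX -(big_morph _ (@mpolyXD _ k) (@mpolyX0 _ k)) -mpolyXD.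
congr mpolyX; apply: mexp_inj => x; rewrite mexp_mnm_of // mexpD.
case: x => [j | []] /=; rewrite ?mnm_sumE.
- rewrite mnm1E (negbTE (neq_lift _ _)) add0n.
  under eq_bigr => i _ do rewrite mnm1E (inj_eq (@lift_inj _ ord0)).
  case: (boolP (j \in I)) => jI.
    by rewrite (bigD1 j) //= eqxx big1 // => i /andP[_ /negbTE ->].
  by apply: big1 => i iI; case: eqP iI => // ->; rewrite (negbTE jI).
- by [].
- rewrite mnm1E eqxx big1 // => i _.
  by rewrite mnm1E eq_sym (negbTE (neq_lift _ _)).
Qed.

Lemma hibi_ringC c : R c%:MP. Proof. exact: kalg_const. Qed.
Lemma hibi_ring1 : R 1. Proof. by rewrite -mpolyC1; exact: hibi_ringC. Qed.
Lemma hibi_ring0 : R 0. Proof. by rewrite -mpolyC0; exact: hibi_ringC. Qed.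

Lemma hibi_ring_gen I : poset_ideal le I -> R 'X_[mnm_of (ideal_exp I)].
Proof. by move=> idI; rewrite -hibi_genE; apply: kalg_gen; exists I. Qed.

Lemma hibi_ring_msupp f m : R f -> m \in msupp f -> order_reversing m.
Proof.
move=> Rf; elim: Rf m => [c | g [I [idI ->]] | g h _ IHg _ IHh | g h _ IHg _ IHh] m.
- rewrite msuppC; case: (c == 0) => //; rewrite inE => /eqP ->.
  exact: order_reversing0.
- by rewrite hibi_genE msuppX inE => /eqP ->; exact: order_reversing_ideal_exp.
- by move/msuppD_le; rewrite mem_cat => /orP[/IHg | /IHh].
- move/msuppM_le => /allpairsP[[m1 m2] /= [m1g m2h ->]].
  exact: order_reversingD (IHg _ m1g) (IHh _ m2h).
Qed.

(* Induction on the T-degree: peel off the generator of the ideal [{p_i | m_i > 0}]. *)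
Lemma hibi_ring_mpolyX m : order_reversing m -> R 'X_[m].
Proof.
move: {2}(mexp m (inr false)) (erefl (mexp m (inr false))) => a.
elim: a m => [|a IHa] m m_bot m_rev.
  suff -> : m = 0%MM by rewrite mpolyX0; exact: hibi_ring1.
  apply: mexp_inj => x; have := m_rev _ _ (le_bar_bot le x).
  by rewrite m_bot leqn0 => /eqP ->; case: x => [i | []] //=; rewrite mnm0E.
pose I := [set i | (0 < m (lift ord0 i))%N].
have idI : poset_ideal le I.
  by move=> i j lij; rewrite !inE => /leq_trans; apply; exact: (m_rev (inl i) (inl j)).
have genE x : mexp (mnm_of (ideal_exp I)) x = (0 < mexp m x)%N.
  by rewrite mexp_mnm_of //; case: x m_bot => [i | []] /= m_bot; rewrite ?inE ?m_bot.
have -> : m = (mnm_of (ideal_exp I) + (m - mnm_of (ideal_exp I)))%MM.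
  apply: mexp_inj => x; rewrite mexpD mexpB genE.
  by case: (mexp m x) => // n; rewrite add1n subn1.
rewrite mpolyXD; apply: kalg_mul; first exact: hibi_ring_gen.
apply: IHa => [|x y xy]; first by rewrite mexpB genE m_bot subn1.
by rewrite !mexpB !genE; have := m_rev _ _ xy; lia.
Qed.

Definition T_degree_ge n (f : polyR k N) := forall m, m \in msupp f -> (n <= m ord0)%N.

Lemma ideal_gen_T_degree n (G : polyR k N -> Prop) f :
  (forall g, G g -> R g /\ T_degree_ge n g) ->
  ideal_gen R G f -> R f /\ T_degree_ge n f.
Proof.
move=> G_deg; elim=> [|g /G_deg // | g h _ [Rg g_deg] _ [Rh h_deg] | r g Rr _ [Rg g_deg]].
- by split=> [|m]; [exact: hibi_ring0 | rewrite msupp0].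
- split=> [|m]; first exact: kalg_add.
  by move/msuppD_le; rewrite mem_cat => /orP[/g_deg | /h_deg].
- split=> [|m]; first exact: kalg_mul.
  move/msuppM_le => /allpairsP[[m1 m2] /= [_ m2g ->]].
  by rewrite mnmDE (leq_trans (g_deg _ m2g)) ?leq_addl.
Qed.

Lemma hibi_max_pow_T_degree n f : ideal_pow R (hibi_max le) n f ->
  R f /\ T_degree_ge n f.
Proof.
elim: n f => [|n IHn] f /=; first by [].
apply: ideal_gen_T_degree => _ [g [h [/IHn[Rg g_deg] [max_h ->]]]].
have [Rh h_deg] : R h /\ T_degree_ge 1 h.
  apply: ideal_gen_T_degree max_h => _ [I [idI ->]].
  split; first by apply: kalg_gen; exists I.
  by rewrite hibi_genE => m; rewrite msuppX inE => /eqP ->; rewrite mnmE unlift_none.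
split=> [|m]; first exact: kalg_mul.
move/msuppM_le => /allpairsP[[m1 m2] /= [m1g m2h ->]].
by rewrite mnmDE -addn1 (leq_add (g_deg _ m1g) (h_deg _ m2h)).
Qed.
End HibiMonomials.

Local Open Scope ring_scope.

Section MulMonomialCoeff.
Variables (n : nat) (R : comNzRingType).
Implicit Types (p q : {mpoly R[n]}) (m g h : 'X_{1..n}).

Lemma mcoeffMX_eq0 p m k : ~~ (m <= k)%MM -> (p * 'X_[m])@_k = 0.
Proof.
move=> m_k; apply/eqP; rewrite mcoeff_eq0 (perm_mem (msuppMX _ _)).
by apply: contra m_k => /mapP[m' _ ->]; exact: lem_addr.
Qed.

Lemma mcoeff0_mulX g h p q : 'X_[g] * p = 'X_[h] * q -> p@_0 = (q * 'X_[h])@_g.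
Proof. by rewrite -(mcoeffMX p g) addm0 mulrC => ->; rewrite mulrC. Qed.
End MulMonomialCoeff.

Section SplittingKillsDrops.
Variables (k : fieldType) (N : nat) (le : rel 'I_N).
Hypothesis le_order : is_partial_order le.
Local Notation leb := (le_bar le).
Local Notation poly := (polyR k N).
Local Notation R := (hibi_ring (k:=k) le).
Local Notation mon := 'X_{1..N.+1}.

Definition up_count (x : Pbar N) := #|[set y | leb x y & y != inr true]|.

Lemma up_count_top : up_count (inr true) = 0%N.
Proof. by apply/eqP; rewrite cards_eq0; apply/eqP/setP=> -[y | []]; rewrite !inE. Qed.

Lemma up_count_lt x y : leb x y -> x != y -> (up_count y < up_count x)%N.
Proof.
move=> xy nxy; apply: proper_card; apply/properP; split.
  apply/subsetP=> z; rewrite !inE => /andP[yz ->].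
  by rewrite (le_bar_trans le_order xy yz).
exists x; rewrite !inE ?le_bar_refl //=.
  apply: contraNneq nxy => xt; apply/eqP/(le_bar_anti le_order).
  by rewrite xy xt le_bar_top.
apply/negP=> /andP[yx _]; case/negP: nxy.
by apply/eqP/(le_bar_anti le_order); rewrite xy yx.
Qed.

(* The auxiliary exponents of the exchange below: any two differ by a 0/1 function, and
   each is order reversing because [up_count] drops strictly along the order. *)
Definition height_mnm (a : Pbar N -> bool) := mnm_of (fun x => 2 * up_count x + a x)%N.

Lemma mexp_height_mnm a x : a (inr true) = false ->
  mexp (height_mnm a) x = (2 * up_count x + a x)%N.
Proof. by move=> a_top; rewrite mexp_mnm_of // up_count_top a_top. Qed.

Lemma order_reversing_height_mnm a :
  a (inr true) = false -> order_reversing le (height_mnm a).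
Proof.
move=> a_top; apply: order_reversing_mnm_of => [|x y xy]; first by rewrite up_count_top a_top.
case: (eqVneq x y) => [-> // | nxy]; have := up_count_lt xy nxy.
by case: (a x); case: (a y) => /=; lia.
Qed.

Section CoverCut.
Variables c c' : Pbar N.

(* [c] together with everything above some [z > c] not above [c']; when [c'] covers [c],
   the only way to leave this set upwards is from [c] through [c']. *)
Definition cover_cut x :=
  (x == c) || [exists z, [&& leb c z, z != c, leb z x & ~~ leb c' z]].

Lemma cover_cut_exit x y :
  cover_cut x -> ~~ cover_cut y -> leb x y -> x = c /\ leb c' y.
Proof.
move=> Ex Ey xy.
have xc : x = c.
  case/orP: Ex => [/eqP // | /existsP[z /and4P[cz nzc zx nc'z]]].
  case/negP: Ey; apply/orP; right; apply/existsP; exists z.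
  by rewrite cz nzc nc'z (le_bar_trans le_order zx xy).
split=> //; subst x; apply/negPn/negP=> nc'y.
have nyc : y != c by apply: contraNneq Ey => ->; rewrite /cover_cut eqxx.
case/negP: Ey; apply/orP; right; apply/existsP; exists y.
by rewrite xy nc'y nyc le_bar_refl.
Qed.

Lemma cover_cut_cover : covby leb c c' -> cover_cut c /\ ~~ cover_cut c'.
Proof.
case=> cc' ncc' c'_cov; split; first by rewrite /cover_cut eqxx.
rewrite /cover_cut negb_or eq_sym ncc' /=.
apply/existsP=> -[z /and4P[cz nzc zc' nc'z]].
by case: (c'_cov z cz zc') => zE; [move: nzc | move: nc'z]; rewrite zE ?eqxx ?le_bar_refl.
Qed.
End CoverCut.

Variables (phi : poly -> poly) (q : nat).
Hypotheses (phi_R : forall x, R x -> R (phi x))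
  (phiM : forall r x, R r -> R x -> phi (r ^+ q * x) = r * phi x).

Lemma phi_exchange g h u v : order_reversing le g -> order_reversing le h ->
  order_reversing le u -> order_reversing le v -> (u + g *+ q = v + h *+ q)%MM ->
  'X_[g] * phi 'X_[u] = 'X_[h] * phi 'X_[v].
Proof.
move=> g_rev h_rev u_rev v_rev guhv.
rewrite -!phiM; try exact: hibi_ring_mpolyX.
by rewrite !mpolyXn -!mpolyXD addmC guhv addmC.
Qed.

Section Drop.
Variables (u : mon) (c c' : Pbar N).
Hypotheses (u_rev : order_reversing le u) (cc' : covby leb c c')
  (drop : (mexp u c' + q <= mexp u c)%N).
Local Notation cut := (cover_cut c c').

(* Raise [u] by [q] off the cut: the exchanged coefficient sits at the indicator
   of the complement of the cut, which is not order reversing. *)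
Lemma phi_coeff0_eq0_cut_top : cut (inr true) -> (phi 'X_[u])@_0 = 0.
Proof.
move=> cut_top; have [cut_c cut_c'] := cover_cut_cover cc'; have [le_cc' _ _] := cc'.
pose a x := ~~ cut x.
have a_top : a (inr true) = false by rewrite /a cut_top.
pose v := mnm_of (fun x => mexp u x + q * a x)%N.
have mexp_v x : mexp v x = (mexp u x + q * a x)%N.
  by rewrite mexp_mnm_of // a_top muln0.
have v_rev : order_reversing le v.
  move=> x y xy; rewrite !mexp_v /a; have := u_rev xy.
  case Ex: (cut x); case Ey: (cut y) => /=; try lia.
  by have [-> /u_rev] := cover_cut_exit Ex (negbT Ey) xy; lia.
have uv : (u + height_mnm a *+ q = v + height_mnm xpred0 *+ q)%MM.
  by apply: mexp_inj => x; rewrite !mexpD !mexpMn !mexp_height_mnm // mexp_v /=; lia.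
have h0_rev := @order_reversing_height_mnm xpred0 erefl.
rewrite (mcoeff0_mulX (phi_exchange (order_reversing_height_mnm a_top) h0_rev
  u_rev v_rev uv)).
have -> : height_mnm a = (height_mnm xpred0 + mnm_of a)%MM.
  by apply: mexp_inj => x; rewrite mexpD !mexp_height_mnm // mexp_mnm_of ?a_top ?addn0.
rewrite mcoeffMX; apply/eqP; rewrite mcoeff_eq0; apply/negP.
move/(hibi_ring_msupp (phi_R (hibi_ring_mpolyX k v_rev)))/(_ _ _ le_cc').
by rewrite !mexp_mnm_of ?a_top // /a cut_c cut_c'.
Qed.

(* Lower [u] by [q] at [c]: the exchanged monomial then exceeds the target at [c]. *)
Lemma phi_coeff0_eq0_cut_notop : ~~ cut (inr true) -> (phi 'X_[u])@_0 = 0.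
Proof.
move=> cut_top; have [cut_c cut_c'] := cover_cut_cover cc'.
pose b x := x == c.
have b_top : b (inr true) = false by apply: contraNF cut_top => /eqP ->.
pose v := mnm_of (fun x => mexp u x - q * b x)%N.
have mexp_v x : mexp v x = (mexp u x - q * b x)%N.
  by rewrite mexp_mnm_of // b_top muln0.
have above_c y : leb c y -> y != c -> leb c' y.
  move=> cy nyc; have cut_y : ~~ cut y.
    apply/negP=> cut_y; have [yc _] := cover_cut_exit cut_y cut_top (le_bar_top le y).
    by rewrite yc eqxx in nyc.
  by case: (cover_cut_exit cut_c cut_y cy).
have v_rev : order_reversing le v.
  move=> x y xy; rewrite !mexp_v /b; have := u_rev xy.
  case: (eqVneq x c) => [xc | _]; case: (eqVneq y c) => [yc | nyc] /=; try lia.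
  by subst x; have := u_rev (above_c _ xy nyc); lia.
have uv : (u + height_mnm xpred0 *+ q = v + height_mnm b *+ q)%MM.
  apply: mexp_inj => x; rewrite !mexpD !mexpMn !mexp_height_mnm // mexp_v /b.
  by case: (eqVneq x c) => [-> | _] /=; lia.
have h0_rev := @order_reversing_height_mnm xpred0 erefl.
rewrite (mcoeff0_mulX (phi_exchange h0_rev (order_reversing_height_mnm b_top)
  u_rev v_rev uv)).
rewrite mcoeffMX_eq0 //; apply/negP=> /(mexp_lepm c).
by rewrite !mexp_height_mnm // /b eqxx /=; lia.
Qed.
End Drop.

Lemma phi_coeff0_eq0_of_drop u c c' : order_reversing le u -> covby leb c c' ->
  (mexp u c' + q <= mexp u c)%N -> (phi 'X_[u])@_0 = 0.
Proof.
move=> u_rev cc' drop; case: (boolP (cover_cut c c' (inr true))).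
  exact: phi_coeff0_eq0_cut_top.
exact: phi_coeff0_eq0_cut_notop.
Qed.
End SplittingKillsDrops.

Lemma raddf_sum_on (U V : zmodType) (S : U -> Prop) (f : U -> V) (I : Type)
    (r : seq I) (F : I -> U) :
  S 0 -> (forall x y, S x -> S y -> S (x + y)) ->
  (forall x y, S x -> S y -> f (x + y) = f x + f y) ->
  (forall i, S (F i)) -> f (\sum_(i <- r) F i) = \sum_(i <- r) f (F i).
Proof.
move=> S0 SD fD SF.
suff [] : S (\sum_(i <- r) F i) /\ f (\sum_(i <- r) F i) = \sum_(i <- r) f (F i) by [].
elim: r => [|i r [Sr fr]]; last by rewrite !big_cons fD // fr; split; [exact: SD | ].
rewrite !big_nil; split=> //.
by apply: (@addrI _ (f 0)); rewrite -fD // !addr0.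
Qed.

Section SplittingBound.
Variables (k : fieldType) (N : nat) (le : rel 'I_N).
Hypothesis le_order : is_partial_order le.
Local Notation leb := (le_bar le).
Local Notation R := (hibi_ring (k:=k) le).

Lemma splitting_degree_bound (C : {set Pbar N}) q n d :
  is_maximal_chain leb C -> (forall c : k, exists y, y ^+ q = c) ->
  ideal_pow R (hibi_max le) n d -> splits_at R q d -> (n <= #|C|.-1 * q.-1)%N.
Proof.
move=> maxC roots dn [phi [phi_R phiD phiM phi_d]].
have [Rd d_deg] := hibi_max_pow_T_degree dn.
rewrite leqNgt; apply/negP=> big_n.
have kill m : m \in msupp d -> (phi 'X_[m])@_0 = 0.
  move=> md; have m_rev := hibi_ring_msupp Rd md.
  apply/eqP/negPn/negP=> nz; suff : (m ord0 <= #|C|.-1 * q.-1)%N.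
    by move/(leq_trans (d_deg _ md))/(leq_trans big_n); rewrite ltnn.
  apply: (maximal_chain_weight_bound (le_bar_refl le_order) (le_bar_trans le_order)
    (le_bar_anti le_order) (le_bar_bot le) (le_bar_top le) (w := mexp m) maxC) => //.
  move=> x y _ _ cov; rewrite ltnNge; apply: contra nz => drop.
  by rewrite (phi_coeff0_eq0_of_drop le_order phi_R phiM m_rev cov drop).
have R_term m : R (d@_m *: 'X_[m]).
  have [md | /memN_msupp_eq0 ->] := boolP (m \in msupp d); last first.
    by rewrite scale0r; exact: hibi_ring0.
  rewrite -mul_mpolyC; apply: kalg_mul; first exact: hibi_ringC.
  exact: hibi_ring_mpolyX (hibi_ring_msupp Rd md).
have : (phi d)@_0 = 0.
  rewrite {1}(mpolyE d).
  rewrite (raddf_sum_on _ (@hibi_ring0 k N le) (@kalg_add _ _ _) phiD R_term).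
  rewrite raddf_sum big_seq big1 // => m md.
  have [y <-] := roots d@_m.
  rewrite -mul_mpolyC rmorphXn /= phiM ?mcoeffCM ?kill ?mulr0 //; first exact: hibi_ringC.
  exact: hibi_ring_mpolyX (hibi_ring_msupp Rd md).
have := phi_d 1 (@hibi_ring1 k N le); rewrite expr1n mul1r => phi_d1.
by rewrite phi_d1 mcoeff1 eqxx => /eqP; rewrite oner_eq0.
Qed.
End SplittingBound.

Lemma le_of_ceil_mul_le (F : archiRealFieldType) (t : F) (n q : nat) :
  (1 < q)%N -> 0 <= t -> (0 < n)%N ->
  (`|Num.ceil (t * (q%:R - 1))|%N <= n.-1 * q.-1)%N -> t <= (n%:Z - 1)%:~R.
Proof.
move=> q_gt1 t_ge0 n_gt0 ceil_le.
have q1_gt0 : 0 < q%:R - 1 :> F by rewrite subr_gt0 ltr1n.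
have tq_ge0 : 0 <= t * (q%:R - 1) by rewrite mulr_ge0 // ltW.
have ceil_nneg : 0 <= Num.ceil (t * (q%:R - 1)).
  by rewrite ceil_ge0 (lt_le_trans _ tq_ge0) // ltrN10.
rewrite -(ler_pM2r q1_gt0) (le_trans (ceil_ge _)) //.
rewrite -(ger0_norm ceil_nneg) -natr_absz.
rewrite (le_trans (_ : _ <= (n.-1 * q.-1)%:R)) ?ler_nat //.
have -> : (n%:Z - 1)%:~R = n.-1%:R :> F by rewrite (subzn n_gt0) subn1.
have -> : q%:R - 1 = q.-1%:R :> F by rewrite -subn1 natrB // ltnW.
by rewrite natrM.
Qed.

Lemma perfect_field_root_pow (k : fieldType) (p e : nat) : perfect_field k p ->
  forall c : k, exists y, y ^+ (p ^ e) = c.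
Proof.
move=> perf_k; elim: e => [|e IHe] c; first by exists c; rewrite expn0 expr1.
have [y <-] := perf_k c; have [z <-] := IHe y.
by exists z; rewrite -exprM expnSr.
Qed.

Theorem corollary3p8 (k : fieldType) (p : nat) (N : nat) (le : rel 'I_N)
  (rT : realType) :
  p \in [pchar k] -> perfect_field k p -> is_partial_order le ->
  (fpt (hibi_ring (k:=k) le) (hibi_max (k:=k) le) p rT
     <= ((min_maxchain_len (le_bar le))%:~R : rT)%:E)%E /\
  min_maxchain_len (le_bar le) = (min_maxchain_len le + 2)%R.
Proof.
move=> char_p perf_k le_order; split; last exact: min_maxchain_len_bar.
have p_gt1 : (1 < p)%N by apply/prime_gt1/(pcharf_prime char_p).
have [C maxC [-> _]] := min_maxchain_lenP (le_bar le).
have C_gt0 : (0 < #|C|)%N.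
  apply/card_gt0P; exists (inr false).
  by apply: (maximal_chain_mem (le_bar_refl le_order) maxC) => y _; rewrite le_bar_bot.
apply: ge_ereal_sup => _ [t [t_ge0 [e0 Fpure]] <-]; rewrite lee_fin.
have [d [dn split_d]] := Fpure e0.+1 (leqnSn _).
apply: (le_of_ceil_mul_le _ t_ge0 C_gt0 (splitting_degree_bound le_order maxC _ dn split_d)).
  exact: leq_ltn_trans (ltn0Sn e0) (ltn_expl _ p_gt1).
exact: perfect_field_root_pow.
Qed.
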